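(* With $\mathbb P$-probability one, the sequence of probability measures $Q_t^\omega$, $t=1,2,\dots$, on $\mathbb R^{N^2+N}$ is exponentially tight, i.e., for every $M<\infty$ there is a compact $K\subseteq\mathbb R^{N^2+N}$ with $\limsup_{t\to\infty}\frac1t\log Q_t^\omega(K^c)\le-M$.
   Context: $V=\{1,\dots,N\}$; $P$ row-stochastic irreducible aperiodic with stationary distribution $\pi>0$. $\mathcal S^t=\{s^t\in V^t:\pi_{s_1}\prod_{k<t}P_{s_ks_{k+1}}>0\}$, $C_t=|\mathcal S^t|$. $K_{ij}(s^t)=|\{1\le k\le t:s_k=i,s_{k+1}=j\}|$ with $s_{t+1}:=s_1$, $\Theta_t(s^t)=K(s^t)/t$. On $(\Omega,\mathcal F,\mathbb P)$, for each $t$ and $s^t\in\mathcal S^t$, $Z_{s^t}\in\mathbb R^t$ has i.i.d. $\mathcal N(0,1)$ entries, all these vectors (over all $s^t$, all $t$) mutually independent. $\mathcal Z^\omega_{t,i}(s^t)=\frac1t\sum_{k\le t:s_k=i}Z_{s^t,k}(\omega)$ ($0$ if the sum is empty). $Q_t^\omega(B)=\frac1{C_t}|\{s^t\in\mathcal S^t:(\Theta_t(s^t),\mathcal Z_t^\omega(s^t))\in B\}|$. *)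

From HB Require Import structures.
From mathcomp Require Import all_boot all_order all_algebra.
From mathcomp Require Import all_classical all_reals all_analysis.
Set Implicit Arguments. Unset Strict Implicit. Unset Printing Implicit Defensive.
Import Order.TTheory GRing.Theory Num.Theory.
Import numFieldNormedType.Exports.
Local Open Scope classical_set_scope.
Local Open Scope ring_scope.

Definition mxpow (R : realType) (N : nat) (A : 'M[R]_N) (m : nat) : 'M[R]_N :=
  iter m (mulmx A) 1%:M.

Definition row_stochastic (R : realType) (N : nat) (P : 'M[R]_N) : Prop :=
  (forall i j, 0 <= P i j) /\ (forall i, \sum_(j < N) P i j = 1).

Definition irreducible_mx (R : realType) (N : nat) (P : 'M[R]_N) : Prop :=
  forall i j : 'I_N, exists m : nat, 0 < mxpow P m i j.

Definition aperiodic_mx (R : realType) (N : nat) (P : 'M[R]_N) : Prop :=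
  forall (i : 'I_N) (d : nat), (forall m, 0 < mxpow P m i i -> (d %| m)%N) -> d = 1%N.

Definition stationary_distribution (R : realType) (N : nat) (P : 'M[R]_N)
  (pi : 'rV[R]_N) : Prop :=
  (forall i, 0 <= pi 0 i) /\ \sum_(i < N) pi 0 i = 1 /\ pi *m P = pi.

Definition admissible (R : realType) (N : nat) (P : 'M[R]_N) (pi : 'rV[R]_N)
  (s : seq 'I_N) : bool :=
  match s with
  | [::] => false
  | x :: s' => 0 < pi 0 x * \prod_(k < size s') P (nth x s k) (nth x s k.+1)
  end.

Definition Sset (R : realType) (N t : nat) (P : 'M[R]_N) (pi : 'rV[R]_N)
  : {set t.-tuple 'I_N} := [set s : t.-tuple 'I_N | admissible P pi s].

Definition Ccard (R : realType) (N t : nat) (P : 'M[R]_N) (pi : 'rV[R]_N) : nat :=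
  #|Sset t P pi|.

(* K_ij(s) with cyclic convention s_{t+1} = s_1 *)
Definition Kcount (N t : nat) (s : t.-tuple 'I_N) (i j : 'I_N) : nat :=
  \sum_(k < t) ((tnth s k == i) && (tnth s (ordS k) == j)).

Definition Theta (R : realType) (N t : nat) (s : t.-tuple 'I_N) : 'M[R]_N :=
  \matrix_(i, j) ((Kcount s i j)%:R / t%:R).

(* index set of the Gaussian family: (t, s^t, k) *)
Definition Idx (N : nat) := {t : nat & (t.-tuple 'I_N * 'I_t)%type}.

Definition mkIdx (N t : nat) (s : t.-tuple 'I_N) (k : 'I_t) : Idx N :=
  existT _ t (s, k).

Definition valid_idx (R : realType) (N : nat) (P : 'M[R]_N) (pi : 'rV[R]_N)
  : set (Idx N) := fun i => admissible P pi (tval (tagged i).1).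

Definition Zemp (R : realType) (N : nat) (Omega : Type) (Z : Idx N -> Omega -> R)
  (t : nat) (w : Omega) (s : t.-tuple 'I_N) : 'rV[R]_N :=
  \row_i (t%:R^-1 * \sum_(k < t | tnth s k == i) Z (mkIdx s k) w).

(* Q^omega_t(B) on R^{N^2+N} = 'M_N * 'rV_N *)
Definition Qt (R : realType) (N : nat) (P : 'M[R]_N) (pi : 'rV[R]_N)
  (Omega : Type) (Z : Idx N -> Omega -> R) (t : nat) (w : Omega)
  (B : set ('M[R]_N * 'rV[R]_N)) : R :=
  (#|[set s in Sset t P pi | `[< B (Theta R s, Zemp Z w s) >] ]|)%:R
    / (Ccard t P pi)%:R.

Definition log_rate (R : realType) (t : nat) (x : R) : \bar R :=
  if x == 0 then -oo%E else ((ln x) / t%:R)%:E.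

Definition mutually_independent (d : measure_display) (T : measurableType d)
  (R : realType) (Pr : probability T R) (I : eqType) (D : set I)
  (X : I -> T -> R) : Prop :=
  forall (J : seq I), uniq J -> (forall i, i \in J -> D i) ->
  forall B : I -> set R, (forall i, measurable (B i)) ->
  Pr (\big[setI/setT]_(i <- J) (X i @^-1` B i)) =
    (\prod_(i <- J) Pr (X i @^-1` B i))%E.

Definition std_normal (d : measure_display) (T : measurableType d)
  (R : realType) (Pr : probability T R) (X : T -> R) : Prop :=
  measurable_fun setT X /\
  forall B : set R, measurable B -> Pr (X @^-1` B) = normal_prob 0 1 B.

From HB Require Import structures.
From mathcomp Require Import all_boot all_order all_algebra.
From mathcomp Require Import all_classical all_reals all_analysis.
From mathcomp Require Import ring lra measurable_realfun.
Set Implicit Arguments. Unset Strict Implicit. Unset Printing Implicit Defensive.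
Import Order.TTheory GRing.Theory Num.Theory.
Import numFieldNormedType.Exports.
Local Open Scope classical_set_scope.
Local Open Scope ring_scope.

(* The compact set is K_L = [-1,1]^(N*N) x [-(L+1), L+1]^N.  The pair
   measure Theta_t(s) always lies in the first factor, so Q_t(K_L^c) > 0
   forces some admissible path s with |Z_{s,1}| + ... + |Z_{s,t}| >= (L+1)t.
   Discretizing the |Z_{s,k}| to integer levels a_k with a_1 + ... + a_t >= Lt
   turns this event into a finite union of independent product events, and
   the Gaussian tail bound P(|Z| >= a) <= C e^{-2a} together with
   |S^t| <= N^t gives probability at most (N (2C) e^{-L})^t <= 2^{-t} for L
   large.  By Borel-Cantelli, almost surely Q_t(K_L^c) = 0 for all large t,
   so (1/t) log Q_t(K_L^c) is eventually -oo. *)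

Section measure_union_bound.
Context d (T : measurableType d) (R : realType) (mu : {measure set T -> \bar R}).

Lemma measure_bigsetU_le (I : Type) (r : seq I) (Q : pred I) (F : I -> set T) :
  (forall i, Q i -> measurable (F i)) ->
  (mu (\big[setU/set0]_(i <- r | Q i) F i) <= \sum_(i <- r | Q i) mu (F i))%E.
Proof.
move=> mF; elim: r => [|x r IH]; first by rewrite !big_nil measure0.
rewrite !big_cons; case: ifP => Qx //.
apply: le_trans (measureU2 _ _ _) _; first exact: mF.
  exact: bigsetU_measurable.
exact: leeD.
Qed.

End measure_union_bound.

Lemma lee_prod (R : realType) (I : eqType) (r : seq I) (f g : I -> \bar R) :
  (forall i, (0 <= f i)%E) -> (forall i, i \in r -> (f i <= g i)%E) ->
  (\prod_(i <- r) f i <= \prod_(i <- r) g i)%E.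
Proof.
move=> f0; elim: r => [|x r IH] fg; first by rewrite !big_nil.
rewrite !big_cons; apply: lee_pmul => //; first exact: prode_ge0.
  by apply: fg; rewrite mem_head.
by apply: IH => i ir; apply: fg; rewrite in_cons ir orbT.
Qed.

Section exponential_sums.
Variable R : realType.

Lemma sum_halfX_le2 n : \sum_(k < n) ((2:R)^-1) ^+ k <= 2.
Proof.
elim: n => [|n IH]; first by rewrite big_ord0.
rewrite big_ord_recl expr0.
under eq_bigr do rewrite /bump /= exprS.
rewrite -big_distrr /=.
have := ler_wpM2l (_ : 0 <= (2:R)^-1) IH; lra.
Qed.

Lemma expRN_le_halfX (a : nat) : expR (- (a%:R : R)) <= 2^-1 ^+ a.
Proof.
rewrite -mulrN1 expRM_natl; apply: lerXn2r; rewrite ?nnegrE ?expR_ge0 //.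
rewrite expRN lef_pV2 ?posrE ?expR_gt0 //.
have := expR_ge1Dx (1:R); lra.
Qed.

Lemma exists_nat_mulr_expRN_le (c e : R) : 0 <= c -> 0 < e ->
  exists L : nat, c * expR (- L%:R) <= e.
Proof.
move=> c0 e0; exists (Num.truncn (c / e)).+1.
have /andP[_] := truncn_itv (divr_ge0 c0 (ltW e0)).
set L := (Num.truncn (c / e)).+1; rewrite ltr_pdivrMr // => cL.
rewrite expRN ler_pdivrMr ?expR_gt0 //; apply: (le_trans (ltW cL)).
rewrite mulrC ler_pM2l //; have := expR_ge1Dx (L%:R : R); lra.
Qed.

Lemma sum_ffun_prod_halfX_le (c : R) t m : 0 <= c ->
  \sum_(a : {ffun 'I_t -> 'I_m}) \prod_k (c * 2^-1 ^+ a k) <= (2 * c) ^+ t.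
Proof.
move=> c0; rewrite -(bigA_distr_bigA (fun (k : 'I_t) (n : 'I_m) => c * 2^-1 ^+ n)) /=.
have -> : (2 * c) ^+ t = \prod_(k < t) (2 * c) by rewrite prodr_const card_ord.
apply: ler_prod => k _; rewrite sumr_ge0 => [|n _]; last by rewrite mulr_ge0 ?exprn_ge0.
by rewrite -big_distrr /= mulrC ler_wpM2r // sum_halfX_le2.
Qed.

Lemma prod_expR_heavy_le (c : R) t (a : 'I_t -> nat) m :
  0 <= c -> (m <= \sum_k a k)%N ->
  \prod_k (c * expR (- (2 * (a k)%:R))) <= expR (- m%:R) * \prod_k (c * 2^-1 ^+ a k).
Proof.
move=> c0 ma.
have -> : \prod_k (c * expR (- (2 * (a k)%:R))) =
    \prod_k expR (- ((a k)%:R : R)) * \prod_k (c * expR (- (a k)%:R)).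
  rewrite -big_split /=; apply: eq_bigr => k _.
  rewrite mulrCA -expRD; congr (_ * expR _); lra.
apply: ler_pM.
- by apply: prodr_ge0 => k _; exact: expR_ge0.
- by apply: prodr_ge0 => k _; rewrite mulr_ge0 ?expR_ge0.
- by rewrite -expR_sum sumrN -natr_sum ler_expR lerN2 ler_nat.
- apply: ler_prod => k _; rewrite mulr_ge0 ?expR_ge0 //=.
  by rewrite ler_wpM2l // expRN_le_halfX.
Qed.

Lemma sum_prod_expR_heavy_le (c : R) t m : 0 <= c ->
  \sum_(a : {ffun 'I_t -> 'I_m.+1} | (m <= \sum_k a k)%N)
     \prod_k (c * expR (- (2 * (a k)%:R))) <= expR (- m%:R) * (2 * c) ^+ t.
Proof.
move=> c0; apply: le_trans (_ : _ <= \sum_(a : {ffun 'I_t -> 'I_m.+1} |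
    (m <= \sum_k a k)%N) expR (- m%:R) * \prod_k (c * 2^-1 ^+ a k)) _.
  by apply: ler_sum => a; exact: prod_expR_heavy_le.
rewrite -big_distrr /= ler_wpM2l ?expR_ge0 //.
apply: le_trans (sum_ffun_prod_halfX_le t m.+1 c0).
rewrite [X in _ <= X](bigID (fun a : {ffun 'I_t -> 'I_m.+1} => (m <= \sum_k a k)%N)) /=.
rewrite lerDl; apply: sumr_ge0 => a _; apply: prodr_ge0 => k _.
by rewrite mulr_ge0 // exprn_ge0.
Qed.

End exponential_sums.

Section gaussian_tail.
Variable R : realType.

(* Comes from -x^2/2 <= 4 - 2|x| - x^2/4, i.e. (|x| - 4)^2 >= 0, which compares
   the N(0,1) density with e^{4 - 2|x|} times the N(0,2) density. *)
Definition gauss_tail_const : R :=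
  expR 4 * normal_peak 1 / normal_peak (Num.sqrt 2).

Lemma gauss_tail_const_gt0 : 0 < gauss_tail_const.
Proof.
have h1 : 0 < normal_peak (1:R) by apply: normal_peak_gt0; exact: oner_neq0.
have h2 : 0 < normal_peak (Num.sqrt (2:R)) by apply: normal_peak_gt0.
by rewrite /gauss_tail_const divr_gt0 // mulr_gt0 // expR_gt0.
Qed.

Lemma gauss_tail_const_ge0 : 0 <= gauss_tail_const.
Proof. exact/ltW/gauss_tail_const_gt0. Qed.

Lemma measurable_normr_ge (a : R) : measurable [set x : R | a <= `|x|].
Proof.
rewrite (_ : [set x : R | a <= `|x|] = Num.norm @^-1` [set` `[a, +oo[%R]); last first.
  by apply/seteqP; split => x /=; rewrite in_itv /= andbT.
by rewrite -[X in measurable X]setTI; exact: normr_measurable.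
Qed.

Lemma normal_pdf_le_tail (a x : R) : a <= `|x| ->
  normal_pdf 0 1 x <=
    gauss_tail_const * expR (- (2 * a)) * normal_pdf 0 (Num.sqrt 2) x.
Proof.
move=> ax.
have s0 : Num.sqrt (2:R) != 0 by rewrite sqrtr_eq0 -ltNge.
have p0 : normal_peak (Num.sqrt (2:R)) != 0 by rewrite gt_eqF // normal_peak_gt0.
rewrite !normal_pdfE ?oner_neq0 // /normal_fun /gauss_tail_const.
rewrite sqr_sqrtr // !subr0 expr1n.
set p1 := normal_peak 1; set ps := normal_peak (Num.sqrt 2).
have -> : expR 4 * p1 / ps * expR (- (2 * a)) * (ps * expR (- x ^+ 2 / (2 *+ 2)))
    = p1 * expR (4 + - (2 * a) + - x ^+ 2 / (2 *+ 2)).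
  by rewrite !expRD; field.
rewrite ler_wpM2l ?normal_peak_ge0 // ler_expR.
have -> : x ^+ 2 = `|x| ^+ 2 by rewrite -normrX ger0_norm // sqr_ge0.
have := sqr_ge0 (`|x| - 4); rewrite sqrrB.
have -> : (2 *+ 2 : R) = 4 by rewrite -mulr_natr; lra.
lra.
Qed.

Lemma normal_prob_normr_ge (a : R) :
  (normal_prob 0 1 [set x : R | (a <= `|x|)%R] <=
    (gauss_tail_const * expR (- (2 * a)))%:E)%E.
Proof.
have c0 : 0 < gauss_tail_const * expR (- (2 * a)).
  by rewrite mulr_gt0 ?gauss_tail_const_gt0 ?expR_gt0.
have mpdf (s : R) (A : set R) : measurable_fun A (fun x => (normal_pdf 0 s x)%:E).
  by apply/measurable_EFinP/measurable_funTS; exact: measurable_normal_pdf.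
set c := gauss_tail_const * expR (- (2 * a)).
rewrite /normal_prob; apply: (@le_trans _ _ (\int[lebesgue_measure]_(x in
    [set x : R | (a <= `|x|)%R]) (c%:E * (normal_pdf 0 (Num.sqrt 2) x)%:E))%E).
  apply: ge0_le_integral => //.
  - exact: measurable_normr_ge.
  - by move=> x _; rewrite lee_fin normal_pdf_ge0.
  - exact: mpdf.
  - apply/measurable_EFinP/measurable_funTS.
    by apply: measurable_funM => //; exact: measurable_normal_pdf.
  by move=> x /= ax; rewrite -EFinM lee_fin normal_pdf_le_tail.
rewrite ge0_integralZl_EFin ?(ltW c0) //; last 3 first.
- exact: measurable_normr_ge.
- by move=> x _; rewrite lee_fin normal_pdf_ge0.
- exact: mpdf.
rewrite -[X in (_ <= X)%E]mule1 lee_pmul2l ?lte_fin //.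
rewrite -(@integral_normal_pdf R 0 (Num.sqrt 2)).
apply: ge0_subset_integral => //; [exact: measurable_normr_ge|exact: mpdf|].
by move=> x _; rewrite lee_fin normal_pdf_ge0.
Qed.

End gaussian_tail.

Section compact_box.
Variable R : realType.

Definition box n (c : R) : set 'rV[R]_n := [set v | forall j, `[-c, c]%classic (v ord0 j)].
Arguments box : clear implicits.

Lemma box_compact n c : compact (box n c).
Proof. by apply: (@rV_compact R n (fun _ => `[-c, c]%classic)) => _; exact: segment_compact. Qed.

Lemma vec_mx_continuous m n : continuous (@vec_mx R m n).
Proof.
move=> v; apply/(@cvg_ballP R _ _ _ (nbhs_filter v)) => e e0.
apply/nbhs_ballP; exists e => // u [_ hu].
by split => // i j; rewrite !mxE; exact: hu.
Qed.

Definition tight_set N (L : nat) : set ('M[R]_N * 'rV[R]_N) :=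
  (vec_mx @` box (N * N) 1) `*` box N L.+1%:R.
Arguments tight_set : clear implicits.

Lemma tight_set_compact N L : compact (tight_set N L).
Proof.
apply: compact_setX; last exact: box_compact.
apply: continuous_compact; last exact: box_compact.
apply: continuous_subspaceT; exact: vec_mx_continuous.
Qed.

Lemma Kcount_le N t (s : t.-tuple 'I_N) i j : (Kcount s i j <= t)%N.
Proof.
rewrite /Kcount -[t in (_ <= t)%N]card_ord -sum1_card.
by apply: leq_sum => k _; case: (_ && _).
Qed.

Lemma Theta_in_unit_box N t (s : t.-tuple 'I_N) :
  (vec_mx @` box (N * N) 1) (Theta R s).
Proof.
exists (mxvec (Theta R s)); last exact: mxvecK.
move=> k; case/mxvec_indexP: k => i j.
rewrite mxvecE mxE /= in_itv /= -ler_norml ger0_norm ?divr_ge0 //.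
have [->|t0] := eqVneq (t%:R : R) 0; first by rewrite invr0 mulr0.
have t_gt0 : (0 : R) < t%:R by rewrite lt_def t0 ler0n.
by rewrite ler_pdivrMr // mul1r ler_nat Kcount_le.
Qed.

End compact_box.
Arguments box {R} n c.
Arguments tight_set : clear implicits.

Lemma exists_levels_le_normr (R : realType) t m (z : 'I_t -> R) :
  (m + t)%:R <= \sum_k `|z k| ->
  exists a : {ffun 'I_t -> 'I_m.+1},
    (m <= \sum_k a k)%N /\ forall k, (a k)%:R <= `|z k|.
Proof.
move=> hz.
pose a : {ffun 'I_t -> 'I_m.+1} := [ffun k => inord (minn (Num.truncn `|z k|) m)].
have aE k : (a k : nat) = minn (Num.truncn `|z k|) m.
  by rewrite ffunE inordK // ltnS geq_minr.
exists a; split => [|k]; last first.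
  rewrite aE; apply: le_trans (_ : (Num.truncn `|z k|)%:R <= _).
    by rewrite ler_nat geq_minl.
  by rewrite truncn_le.
have [/existsP[k hk]|] := boolP [exists k, m <= Num.truncn `|z k|]%N.
  by rewrite (bigD1 k) //= aE (minn_idPr hk) leq_addr.
rewrite negb_exists => /forallP small.
have aT k : (a k : nat) = Num.truncn `|z k|.
  by rewrite aE; apply/minn_idPl/ltnW; rewrite ltnNge small.
suff : ((m + t)%:R : R) <= (\sum_k a k + t)%:R by rewrite ler_nat leq_add2r.
apply: le_trans hz _; rewrite natrD natr_sum -[t in t%:R]card_ord -sum1_card.
rewrite natr_sum -big_split /=; apply: ler_sum => k _; rewrite aT natr1.
by have /andP[_ /ltW] := truncn_itv (normr_ge0 (z k)).
Qed.

Section exceptional_events.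
Context (R : realType) (N : nat) (P : 'M[R]_N) (pi : 'rV[R]_N)
  (d : measure_display) (Omega : measurableType d) (Pr : probability Omega R)
  (Z : Idx N -> Omega -> R).
Hypothesis HZ : forall i, valid_idx P pi i -> std_normal Pr (Z i).
Hypothesis Hind : mutually_independent Pr (valid_idx P pi) Z.

Local Notation C := (gauss_tail_const R).

Definition tail_set (a : nat) : set R := [set x | a%:R <= `|x|].

Definition path_idx t (s : t.-tuple 'I_N) : seq (Idx N) :=
  [seq mkIdx s k | k <- enum 'I_t].

(* Reads a level vector a : 'I_t -> _ as a function on all indices; the
   detour through a list is needed because the position type 'I_t of an
   index depends on its length t. *)
Definition idx_level t m (a : {ffun 'I_t -> 'I_m}) (i : Idx N) : nat :=
  nth 0%N [seq (a k : nat) | k <- enum 'I_t] (tagged i).2.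

Lemma idx_levelE t m (a : {ffun 'I_t -> 'I_m}) (s : t.-tuple 'I_N) k :
  idx_level a (mkIdx s k) = a k.
Proof. by rewrite /idx_level /mkIdx /= (nth_map k) ?size_enum_ord // nth_ord_enum. Qed.

Definition level_event t m (s : t.-tuple 'I_N) (a : {ffun 'I_t -> 'I_m}) : set Omega :=
  \big[setI/setT]_(i <- path_idx s) (Z i @^-1` tail_set (idx_level a i)).

(* |Z_{s,1}| + ... + |Z_{s,t}| >= (L+1)t forces integer levels a_k <= |Z_{s,k}|
   with a_1 + ... + a_t >= Lt; capping them at Lt keeps the union finite. *)
Definition heavy_event L t (s : t.-tuple 'I_N) : set Omega :=
  \big[setU/set0]_(a : {ffun 'I_t -> 'I_(L * t).+1} | (L * t <= \sum_k a k)%N)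
    level_event s a.

Definition bad_event L t : set Omega :=
  \big[setU/set0]_(s in Sset t P pi) heavy_event L s.

Lemma path_idx_valid t (s : t.-tuple 'I_N) i : s \in Sset t P pi ->
  i \in path_idx s -> valid_idx P pi i.
Proof. by rewrite inE => sS /mapP[k _ ->]. Qed.

Lemma uniq_path_idx t (s : t.-tuple 'I_N) : uniq (path_idx s).
Proof.
rewrite map_inj_uniq ?enum_uniq // => k1 k2.
by move/(congr1 (fun i : Idx N => nat_of_ord (tagged i).2)) => /val_inj.
Qed.

Lemma measurable_Z_tail i a : valid_idx P pi i -> measurable (Z i @^-1` tail_set a).
Proof.
move=> vi; rewrite -[X in measurable X]setTI.
exact: (HZ vi).1 _ (measurable_normr_ge _).
Qed.

Lemma Pr_Z_tail i a : valid_idx P pi i ->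
  (Pr (Z i @^-1` tail_set a) <= (C * expR (- (2 * a%:R)))%:E)%E.
Proof.
by move=> vi; rewrite (HZ vi).2 ?normal_prob_normr_ge //; exact: measurable_normr_ge.
Qed.

Lemma measurable_level_event t m (s : t.-tuple 'I_N) (a : {ffun 'I_t -> 'I_m}) :
  s \in Sset t P pi -> measurable (level_event s a).
Proof.
move=> sS; rewrite /level_event big_seq; apply: bigsetI_measurable => i iJ.
exact/measurable_Z_tail/(path_idx_valid sS).
Qed.

Lemma measurable_heavy_event L t (s : t.-tuple 'I_N) : s \in Sset t P pi ->
  measurable (heavy_event L s).
Proof. by move=> sS; apply: bigsetU_measurable => a _; exact: measurable_level_event. Qed.

Lemma measurable_bad_event L t : measurable (bad_event L t).
Proof. by apply: bigsetU_measurable => s; exact: measurable_heavy_event. Qed.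

Lemma Pr_level_event_le t m (s : t.-tuple 'I_N) (a : {ffun 'I_t -> 'I_m}) :
  s \in Sset t P pi ->
  (Pr (level_event s a) <= (\prod_k (C * expR (- (2 * (a k)%:R))))%:E)%E.
Proof.
move=> sS; rewrite /level_event Hind; first last.
- by move=> i; exact: measurable_normr_ge.
- by move=> i; exact: path_idx_valid.
- exact: uniq_path_idx.
apply: le_trans (lee_prod (g := fun i => (C * expR (- (2 * (idx_level a i)%:R)))%:E) _ _) _.
- by move=> i; exact: measure_ge0.
- by move=> i iJ; apply/Pr_Z_tail/(path_idx_valid sS).
rewrite prodEFin lee_fin /path_idx big_map big_enum /=.
by under eq_bigr do rewrite idx_levelE.
Qed.

Lemma Pr_heavy_event_le L t (s : t.-tuple 'I_N) : s \in Sset t P pi ->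
  (Pr (heavy_event L s) <= (expR (- (L * t)%:R) * (2 * C) ^+ t)%:E)%E.
Proof.
move=> sS; apply: le_trans.
  by apply: measure_bigsetU_le => a _; exact: measurable_level_event.
apply: (@le_trans _ _ (\sum_(a : {ffun 'I_t -> 'I_(L * t).+1} |
    (L * t <= \sum_k a k)%N) \prod_k (C * expR (- (2 * (a k)%:R))))%:E).
  by rewrite -sumEFin; apply: lee_sum => a _; exact: Pr_level_event_le.
by rewrite lee_fin sum_prod_expR_heavy_le // gauss_tail_const_ge0.
Qed.

Definition bad_ratio L : R := N%:R * (2 * C) * expR (- L%:R).

Lemma bad_ratio_ge0 L : 0 <= bad_ratio L.
Proof. by rewrite mulr_ge0 ?expR_ge0 // mulr_ge0 // mulr_ge0 // gauss_tail_const_ge0. Qed.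

Lemma exists_bad_ratio_le_half : exists L, bad_ratio L <= 2^-1.
Proof.
apply: exists_nat_mulr_expRN_le; last by rewrite invr_gt0.
by rewrite mulr_ge0 // mulr_ge0 // gauss_tail_const_ge0.
Qed.

Lemma Pr_bad_event_le L t : (Pr (bad_event L t) <= (bad_ratio L ^+ t)%:E)%E.
Proof.
apply: le_trans; first by apply: measure_bigsetU_le; exact: measurable_heavy_event.
apply: (@le_trans _ _ (\sum_(s in Sset t P pi)
    (expR (- (L * t)%:R) * (2 * C) ^+ t)%:E)%E).
  by apply: lee_sum => s; exact: Pr_heavy_event_le.
have hcard : (#|Sset t P pi| <= N ^ t)%N.
  by have := max_card (Sset t P pi); rewrite card_tuple card_ord.
have -> : expR (- (L * t)%:R) = expR (- L%:R) ^+ t :> R.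
  by rewrite natrM -mulNr expRM_natr.
have : 0 <= 2 * C by rewrite mulr_ge0 // gauss_tail_const_ge0.
rewrite /bad_ratio; move: (2 * C) => c c0.
rewrite sumEFin sumr_const lee_fin -[_ *+ _]mulr_natl (mulrC (expR _ ^+ t)).
rewrite 2!exprMn -natrX -mulrA ler_wpM2r ?ler_nat //.
by rewrite mulr_ge0 ?exprn_ge0 ?expR_ge0.
Qed.

Lemma Pr_bad_event_summable L : bad_ratio L <= 2^-1 ->
  (\sum_(t <oo) Pr (bad_event L t) < +oo)%E.
Proof.
move=> hL.
apply: le_lt_trans (lee_nneseries (v := fun t => ((2:R) / (2 ^ (t + 1))%:R)%:E) _ _) _.
- by move=> t _ _; exact: measure_ge0.
- move=> t _; apply: le_trans (Pr_bad_event_le L t) _.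
  have -> : (2:R) / (2 ^ (t + 1))%:R = 2^-1 ^+ t.
    by rewrite addn1 expnS natrM natrX invfM mulrA divff // mul1r exprVn.
  by rewrite lee_fin lerXn2r ?nnegrE ?bad_ratio_ge0.
rewrite (_ : (\sum_(t <oo) _)%E = (2 / 2 ^+ 0)%:E) ?ltry //.
by apply: cvg_lim => //; exact: (@cvg_geometric_eseries_half R 2 0).
Qed.

Lemma bad_event_finitely_often L : bad_ratio L <= 2^-1 ->
  {ae Pr, forall w, exists n, forall t, (n <= t)%N -> ~ bad_event L t w}.
Proof.
move=> hL; exists (lim_sup_set (bad_event L)); split.
- apply: bigcap_measurable => // n _; apply: bigcup_measurable => t _.
  exact: measurable_bad_event.
- apply: lim_sup_set_cvg0 => //; last exact: Pr_bad_event_summable.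
  by move=> t; exact: measurable_bad_event.
move=> w /= often n _; apply: contrapT => never; apply: often.
by exists n => t nt bad; apply: never; exists t.
Qed.

Lemma Zemp_le_sum_normr t (s : t.-tuple 'I_N) w j :
  t%:R * `|Zemp Z w s 0 j| <= \sum_k `|Z (mkIdx s k) w|.
Proof.
rewrite mxE normrM ger0_norm ?invr_ge0 // mulrA.
have [->|t0] := eqVneq (t%:R : R) 0; first by rewrite !mul0r sumr_ge0.
rewrite divff // mul1r; apply: le_trans (ler_norm_sum _ _ _) _.
rewrite [X in _ <= X](bigID (fun k => tnth s k == j)) /= lerDl.
by apply: sumr_ge0.
Qed.

Lemma Zemp_in_box L t (s : t.-tuple 'I_N) w :
  ~ heavy_event L s w -> box N L.+1%:R (Zemp Z w s).
Proof.
move=> light j; rewrite /= in_itv /= -ler_norml leNgt; apply/negP => /ltW big.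
apply: light; have [|a [ha az]] := @exists_levels_le_normr R t (L * t)%N
    (fun k => Z (mkIdx s k) w).
  apply: le_trans (Zemp_le_sum_normr s w j).
  by rewrite -mulSnr natrM mulrC ler_wpM2l.
rewrite /heavy_event -bigcup_seq_cond; exists a; first by rewrite /= mem_index_enum.
rewrite /level_event -bigcap_seq => i /= /mapP[k _ ->].
by rewrite /preimage /= idx_levelE; exact: az.
Qed.

Lemma Qt_tight_setC_eq0 L t w :
  ~ bad_event L t w -> Qt P pi Z t w (~` tight_set R N L) = 0.
Proof.
move=> good; rewrite /Qt (_ : #|_| = 0%N) ?mul0r //.
apply/eqP; rewrite cards_eq0; apply/eqP/setP => s; rewrite !inE.
apply/negbTE/negP => /andP[sS /asboolP]; apply; split; first exact: Theta_in_unit_box.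
apply: Zemp_in_box => heavy; apply: good.
by rewrite /bad_event -bigcup_seq_cond; exists s => //=; rewrite mem_index_enum inE.
Qed.

End exceptional_events.

Lemma limn_esup_log_rate_eventually0 (R : realType) (u : nat -> R) n :
  (forall t, (n <= t)%N -> u t = 0) -> limn_esup (fun t => log_rate t (u t)) = -oo%E.
Proof.
move=> u0; apply: (cvgNy_limn_einf_sup _).2; apply/cvgeNyPle => A.
by exists n => // t /= nt; rewrite /log_rate u0 ?eqxx ?leNye.
Qed.

Theorem lemma7 (R : realType) (N : nat) (P : 'M[R]_N) (pi : 'rV[R]_N)
  (HP : row_stochastic P) (Hirr : irreducible_mx P) (Hap : aperiodic_mx P)
  (Hpi : stationary_distribution P pi) (Hpos : forall i, 0 < pi 0 i)
  (d : measure_display) (Omega : measurableType d) (Pr : probability Omega R)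
  (Z : Idx N -> Omega -> R)
  (HZ : forall i, valid_idx P pi i -> std_normal Pr (Z i))
  (Hind : mutually_independent Pr (valid_idx P pi) Z) :
  {ae Pr, forall w : Omega,
    forall M : R, exists K : set ('M[R]_N * 'rV[R]_N),
      compact K /\
      (limn_esup (fun t => log_rate t (Qt P pi Z t w (~` K))) <= (- M)%:E)%E}.
Proof.
have [L ratio_le] := exists_bad_ratio_le_half R N.
apply: filterS (bad_event_finitely_often HZ Hind ratio_le) => w [n good] M.
exists (tight_set R N L); split; first exact: tight_set_compact.
rewrite (@limn_esup_log_rate_eventually0 _ _ n) ?leNye // => t nt.
exact: Qt_tight_setC_eq0 (good t nt).
Qed.
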